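(* Let $S=s_1,\ldots,s_n$ be a sequence of nonnegative integers, $\gamma>0$, $k$ a positive integer, $\epsilon>0$, and let $L$ be a level sequence. Let $0<\alpha<1$ and $0<\beta<1$, and let $\alpha',\beta'$ satisfy $\alpha^{1+\epsilon}\le\alpha'\le\alpha$ and $\beta^{1+\epsilon}\le\beta'\le\beta$. Then \[ \mathrm{score}_{\mathrm{geo}}(L,S;\alpha',\beta',\gamma)\le(1+\epsilon)\,\mathrm{score}_{\mathrm{geo}}(L,S;\alpha,\beta,\gamma). \]
   Context: A level sequence is $L=\ell_1,\ldots,\ell_n$ of integers with $0\le\ell_i\le k$; set $\ell_0=0$. The penalty is $\mathrm{pen}(x,y)=\max(y-x,0)\,\gamma\log n$. The geometric distribution is $p_{\mathrm{geo}}(s;\lambda)=(1-\lambda)\lambda^s$. $\mathrm{score}_{\mathrm{geo}}(L,S;\alpha,\beta,\gamma)=\sum_{i=1}^n\big[-\log p_{\mathrm{geo}}(s_i;\beta\alpha^{\ell_i})+\mathrm{pen}(\ell_{i-1},\ell_i)\big]$. *)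

From Stdlib Require Import Reals List.
Import ListNotations.
Open Scope R_scope.

Definition p_geo (s : nat) (lam : R) : R := (1 - lam) * lam ^ s.

Definition pen (n : nat) (gamma : R) (x y : nat) : R :=
  Rmax (INR y - INR x) 0 * gamma * ln (INR n).

(* Level sequence L = l_1..l_n given as a function on indices 1..n,
   with the convention l_0 = 0 (the value L 0 is ignored). *)
Definition lvl (L : nat -> nat) (i : nat) : nat :=
  match i with O => O | _ => L i end.

Definition score_geo (n : nat) (L S : nat -> nat) (alpha beta gamma : R) : R :=
  fold_right Rplus 0
    (map (fun i => - ln (p_geo (S i) (beta * alpha ^ (lvl L i)))
                   + pen n gamma (lvl L (i - 1)) (lvl L i))
         (seq 1 n)).

Definition level_seq (n k : nat) (L : nat -> nat) : Prop :=
  forall i, (1 <= i <= n)%nat -> (L i <= k)%nat.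

(* With [lam = beta * alpha ^ l], the term [- ln p_geo(s; lam) = - ln (1 - lam) - s ln lam]
   splits into two nonnegative parts.  Shrinking the parameters from [alpha, beta] to
   [alpha', beta'] shrinks the rate to some [lam' <= lam] with [ln lam' >= (1 + eps) ln lam],
   because [ln] turns the bounds [alpha' >= alpha ^ (1 + eps)], [beta' >= beta ^ (1 + eps)] into
   linear ones.  Hence the first part does not increase and the second grows by at most the
   factor [1 + eps]; the penalties do not depend on the parameters and are nonnegative. *)
From Stdlib Require Import Reals Lra Lia List.
Open Scope R_scope.

Lemma ln_le (x y : R) : 0 < x -> x <= y -> ln x <= ln y.
Proof.
  intros Hx [Hlt | ->]; [left; now apply ln_increasing | apply Rle_refl].
Qed.

Lemma ln_le_0 (x : R) : 0 < x -> x <= 1 -> ln x <= 0.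
Proof. intros Hx Hx1; rewrite <- ln_1; now apply ln_le. Qed.

Lemma ln_ge_of_Rpower_le (c x x' : R) : Rpower x c <= x' -> c * ln x <= ln x'.
Proof.
  intros Hx'; rewrite <- ln_Rpower; apply ln_le; [apply exp_pos | exact Hx'].
Qed.

Lemma fold_right_Rplus_le_scaled (c : R) (f g : nat -> R) (l : list nat) :
  (forall i, In i l -> f i <= c * g i) ->
  fold_right Rplus 0 (map f l) <= c * fold_right Rplus 0 (map g l).
Proof.
  induction l as [| a l IH]; simpl; intros Hfg; [lra |].
  assert (Ha := Hfg a (or_introl eq_refl)).
  assert (Hl : fold_right Rplus 0 (map f l) <= c * fold_right Rplus 0 (map g l))
    by (apply IH; intros i Hi; apply Hfg; now right).
  lra.
Qed.

Lemma neg_ln_p_geo (s : nat) (lam : R) :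
  0 < lam < 1 -> - ln (p_geo s lam) = - ln (1 - lam) - INR s * ln lam.
Proof.
  intros Hlam; unfold p_geo.
  rewrite ln_mult, ln_pow by (try apply pow_lt; lra); ring.
Qed.

Lemma neg_ln_p_geo_le_scaled (s : nat) (c lam lam' : R) :
  1 <= c -> 0 < lam' <= lam -> lam < 1 -> c * ln lam <= ln lam' ->
  - ln (p_geo s lam') <= c * - ln (p_geo s lam).
Proof.
  intros Hc Hlam' Hlam1 Hln.
  rewrite !neg_ln_p_geo by lra.
  assert (H1 : ln (1 - lam) <= ln (1 - lam')) by (apply ln_le; lra).
  assert (H0 : ln (1 - lam) <= 0) by (apply ln_le_0; lra).
  assert (Hs : INR s * (c * ln lam) <= INR s * ln lam')
    by (apply Rmult_le_compat_l; [apply pos_INR | exact Hln]).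
  nra.
Qed.

Lemma ln_rate_ge_scaled (m : nat) (c alpha beta alpha' beta' : R) :
  0 < alpha -> 0 < beta -> Rpower alpha c <= alpha' -> Rpower beta c <= beta' ->
  c * ln (beta * alpha ^ m) <= ln (beta' * alpha' ^ m).
Proof.
  intros Ha Hb Ha' Hb'.
  assert (Ha'0 : 0 < alpha') by (apply Rlt_le_trans with (2 := Ha'); apply exp_pos).
  assert (Hb'0 : 0 < beta') by (apply Rlt_le_trans with (2 := Hb'); apply exp_pos).
  rewrite !ln_mult, !ln_pow by (try apply pow_lt; lra).
  apply ln_ge_of_Rpower_le in Ha', Hb'.
  assert (Hm : INR m * (c * ln alpha) <= INR m * ln alpha')
    by (apply Rmult_le_compat_l; [apply pos_INR | exact Ha']).
  lra.
Qed.

Lemma neg_ln_p_geo_rate_le_scaled (s m : nat) (c alpha beta alpha' beta' : R) :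
  1 <= c -> 0 < alpha < 1 -> 0 < beta < 1 ->
  Rpower alpha c <= alpha' <= alpha -> Rpower beta c <= beta' <= beta ->
  - ln (p_geo s (beta' * alpha' ^ m)) <= c * - ln (p_geo s (beta * alpha ^ m)).
Proof.
  intros Hc Ha Hb Ha' Hb'.
  assert (Ha'0 : 0 < alpha') by (apply Rlt_le_trans with (2 := proj1 Ha'); apply exp_pos).
  assert (Hb'0 : 0 < beta') by (apply Rlt_le_trans with (2 := proj1 Hb'); apply exp_pos).
  assert (Ham : alpha' ^ m <= alpha ^ m) by (apply pow_incr; lra).
  assert (Ham1 : alpha ^ m <= 1) by (rewrite <- (pow1 m); apply pow_incr; lra).
  assert (Ham'0 : 0 < alpha' ^ m) by (apply pow_lt; lra).
  apply neg_ln_p_geo_le_scaled; [exact Hc | split | nra |].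
  - apply Rmult_lt_0_compat; lra.
  - apply Rmult_le_compat; lra.
  - apply ln_rate_ge_scaled; tauto.
Qed.

Lemma pen_nonneg (n : nat) (gamma : R) (x y : nat) :
  (1 <= n)%nat -> 0 <= gamma -> 0 <= pen n gamma x y.
Proof.
  intros Hn Hg; unfold pen.
  apply Rmult_le_pos; [apply Rmult_le_pos; [apply Rmax_r | exact Hg] |].
  rewrite <- ln_1; apply ln_le; [lra |].
  now apply (le_INR 1).
Qed.

Theorem lemma2 (n k : nat) (S L : nat -> nat) (gamma eps alpha beta alpha' beta' : R) :
  0 < gamma -> (0 < k)%nat -> 0 < eps -> level_seq n k L ->
  0 < alpha < 1 -> 0 < beta < 1 ->
  Rpower alpha (1 + eps) <= alpha' <= alpha ->
  Rpower beta (1 + eps) <= beta' <= beta ->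
  score_geo n L S alpha' beta' gamma <= (1 + eps) * score_geo n L S alpha beta gamma.
Proof.
  intros Hg _ He _ Ha Hb Ha' Hb'.
  apply fold_right_Rplus_le_scaled; intros i Hi.
  apply in_seq in Hi.
  rewrite Rmult_plus_distr_l; apply Rplus_le_compat.
  - apply neg_ln_p_geo_rate_le_scaled; lra.
  - assert (Hpen : 0 <= pen n gamma (lvl L (i - 1)) (lvl L i))
      by (apply pen_nonneg; [lia | lra]).
    nra.
Qed.
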